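(* Let $\mathbb{F}$ be any field. The support rank of the $2\times 2$ matrix multiplication tensor $\langle 2,2,2\rangle$ over $\mathbb{F}$ is $7$. That is, every tensor $t\in \mathbb{F}^{2\times 2}\otimes\mathbb{F}^{2\times 2}\otimes\mathbb{F}^{2\times 2}$ with the same support as $\langle 2,2,2\rangle$ has tensor rank at least $7$, and some such tensor has tensor rank exactly $7$.
   Context: Let $e_{ij}$ ($i,j\in\{1,2\}$) be the standard basis of the space $\mathbb{F}^{2\times 2}$ of $2\times 2$ matrices. The matrix multiplication tensor is $\langle 2,2,2\rangle=\sum_{i,j,k\in\{1,2\}} e_{ij}\otimes e_{jk}\otimes e_{ki}\in \mathbb{F}^{2\times 2}\otimes\mathbb{F}^{2\times 2}\otimes\mathbb{F}^{2\times 2}$. The tensor rank of a tensor $t$ is the smallest $r$ such that $t$ is a sum of $r$ simple tensors $v_1\otimes v_2\otimes v_3$. With respect to the fixed basis $\{e_{ab}\otimes e_{cd}\otimes e_{ef}\}$, the support of a tensor is the set of basis elements at which it has a nonzero coefficient. The support rank of $t$ is the minimal tensor rank of a tensor (over $\mathbb{F}$) having the same support as $t$. *)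

From HB Require Import structures.
From mathcomp Require Import all_boot all_order all_algebra.
Set Implicit Arguments. Unset Strict Implicit. Unset Printing Implicit Defensive.
Import GRing.Theory.
Local Open Scope ring_scope.

Definition idx := ('I_2 * 'I_2)%type.

(* A tensor in F^{2x2} (x) F^{2x2} (x) F^{2x2}, given by its coefficients
   w.r.t. the basis e_{ab} (x) e_{cd} (x) e_{ef}. *)
Definition tensor (F : fieldType) := idx -> idx -> idx -> F.

(* <2,2,2> = sum_{i,j,k} e_{ij} (x) e_{jk} (x) e_{ki}. *)
Definition matmul222 (F : fieldType) : tensor F :=
  fun x y z =>
    if [&& x.2 == y.1, y.2 == z.1 & z.2 == x.1] then 1 else 0.

Definition rank_le (F : fieldType) (t : tensor F) (r : nat) : Prop :=
  exists u v w : 'I_r -> idx -> F,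
    forall x y z, t x y z = \sum_(i < r) u i x * v i y * w i z.

Definition is_tensor_rank (F : fieldType) (t : tensor F) (r : nat) : Prop :=
  rank_le t r /\ forall r', rank_le t r' -> (r <= r')%N.

Definition same_support (F : fieldType) (t s : tensor F) : Prop :=
  forall x y z, (t x y z != 0) = (s x y z != 0).

Definition is_support_rank (F : fieldType) (s : tensor F) (r : nat) : Prop :=
  (exists t, same_support t s /\ is_tensor_rank t r) /\
  (forall t, same_support t s -> forall r', rank_le t r' -> (r <= r')%N).

From mathcomp Require Import all_boot all_order all_algebra.
From mathcomp Require Import ring.
From Stdlib Require Import Classical.
Set Implicit Arguments. Unset Strict Implicit. Unset Printing Implicit Defensive.
Import GRing.Theory.
Local Open Scope ring_scope.

(* Strassen's algorithm has only the coefficients 0 and 1 and -1, so it writes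
   <2,2,2> itself as a sum of seven simple tensors over every field.

   For the lower bound let t = sum_{j<6} u_j (x) v_j (x) w_j have the support
   of <2,2,2>, and view v_j (x) w_j as a 4x4 matrix made of the 2x2 blocks
   v_j(.,k) w_j(l,.)^T.  Contracting t with a linear form phi on the first
   factor gives sum_j phi(u_j) v_j (x) w_j, a block-diagonal matrix each of
   whose diagonal blocks determines phi.  Hence the 4-dimensional space R of
   the vectors (phi(u_j))_j annihilates the off-diagonal blocks, no nonzero
   vector of R annihilates a diagonal block, and the six diagonal blocks
   (k,k) span all 2x2 matrices.  As R meets every 3-dimensional coordinate
   subspace of F^6, a case analysis on the indices j with a vanishing
   off-diagonal block and e_j outside R squeezes the six blocks (0,0) (or
   (1,1)) into a space of dimension at most 3, a contradiction. *)

Lemma ord2P (p : 'I_2) : p = 0 \/ p = 1.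
Proof. by case: p => [[|[|n]] Hn]; [left|right|]; try apply: val_inj. Qed.

Lemma ord2_neq01 : (0 : 'I_2) != 1. Proof. by []. Qed.
Lemma ord2_neq10 : (1 : 'I_2) != 0. Proof. by []. Qed.

Lemma ord2_other (k l m : 'I_2) : k != l -> m = k \/ m = l.
Proof.
case: (ord2P k) => ->; case: (ord2P l) => -> //; case: (ord2P m) => ->;
  by [left | right].
Qed.

Lemma ord3P (i : 'I_3) :
  [\/ i = @Ordinal 3 0 isT, i = @Ordinal 3 1 isT | i = @Ordinal 3 2 isT].
Proof.
case: i => [[|[|[|//]]] Hi].
- by constructor 1; apply: val_inj.
- by constructor 2; apply: val_inj.
- by constructor 3; apply: val_inj.
Qed.

Lemma sum_ord3 (V : nmodType) (g : 'I_3 -> V) :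
  \sum_(i < 3) g i = g (@Ordinal 3 0 isT) + g (@Ordinal 3 1 isT) + g (@Ordinal 3 2 isT).
Proof.
rewrite !big_ord_recl big_ord0 addr0 addrA.
by congr (g _ + g _ + g _); apply: val_inj.
Qed.

Section TwoVectors.
Variable F : fieldType.
Implicit Types f g x y : 'I_2 -> F.

Definition nonzero2 f := exists p, f p != 0.

Lemma not_nonzero2 f : ~ nonzero2 f -> forall p, f p = 0.
Proof. by move=> Hf p; apply/eqP/negPn/negP => Hp; apply: Hf; exists p. Qed.

Definition det2 f g := f 0 * g 1 - f 1 * g 0.

Lemma det2C f g : det2 f g = - det2 g f.
Proof. by rewrite /det2; ring. Qed.

Lemma det2_outer_l x y x' y' :
  (forall p q, x p * y q = x' p * y' q) -> nonzero2 y -> det2 x x' = 0.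
Proof.
move=> Exy [q Hq].
have : det2 x x' * y q = 0.
  rewrite /det2; transitivity (x 0 * y q * x' 1 - x 1 * y q * x' 0); first by ring.
  by rewrite (Exy 0 q) (Exy 1 q); ring.
by move/eqP; rewrite mulf_eq0 (negbTE Hq) orbF => /eqP.
Qed.

Lemma det2_outer_r x y x' y' :
  (forall p q, x p * y q = x' p * y' q) -> nonzero2 x -> det2 y y' = 0.
Proof.
move=> Exy [p Hp].
have : det2 y y' * x p = 0.
  rewrite /det2; transitivity (x p * y 0 * y' 1 - x p * y 1 * y' 0); first by ring.
  by rewrite (Exy p 0) (Exy p 1); ring.
by move/eqP; rewrite mulf_eq0 (negbTE Hp) orbF => /eqP.
Qed.

Lemma det2_eq0_scale f g :
  det2 f g = 0 -> nonzero2 g -> exists s, forall p, f p = s * g p.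
Proof.
rewrite /det2 => /eqP; rewrite subr_eq0 => /eqP E [p Hp].
exists (f p / g p) => p'.
case: (ord2P p) Hp => -> Hp; case: (ord2P p') => ->; rewrite ?divfK //.
- by rewrite mulrAC E mulfK.
- by rewrite mulrAC -E mulfK.
Qed.

(* The left-hand side is a rank-one matrix, and the determinant of
   [s x y^T + t x' y'^T] is [s t det[x x'] det[y y']]. *)
Lemma det2_outer_sum x y x' y' x'' y'' s t :
  (forall p q, x'' p * y'' q = s * (x p * y q) + t * (x' p * y' q)) ->
  s * t * det2 x x' * det2 y y' = 0.
Proof.
move=> E.
transitivity ((s * (x 0 * y 0) + t * (x' 0 * y' 0)) * (s * (x 1 * y 1) + t * (x' 1 * y' 1))
  - (s * (x 0 * y 1) + t * (x' 0 * y' 1)) * (s * (x 1 * y 0) + t * (x' 1 * y' 0))).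
  by rewrite /det2; ring.
by rewrite -!E; ring.
Qed.

End TwoVectors.

Lemma annihilator (F : fieldType) (T : finType) n (a : 'I_n -> T -> F) :
  (n < #|T|)%N ->
  exists2 nu : T -> F, exists x, nu x != 0 & forall i, \sum_x nu x * a i x = 0.
Proof.
move=> ltnT; pose M : 'M[F]_(#|T|, n) := \matrix_(r, i) a i (enum_val r).
have : ~~ row_free M.
  by apply/negP => /eqP rM; have := rank_leq_col M; rewrite rM leqNgt ltnT.
rewrite -kermx_eq0 => /rowV0Pn [nu0 /sub_kermxP nuM0 /rV0Pn [r nu0r]].
exists (fun x => nu0 0 (enum_rank x)); first by exists (enum_val r); rewrite enum_valK.
move=> i; transitivity ((nu0 *m M) 0 i); last by rewrite nuM0 mxE.
rewrite mxE (reindex (fun r : 'I_#|T| => enum_val r)) /=; last by apply: onW_bij; exact: enum_val_bij.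
by apply: eq_bigr => r' _; rewrite enum_valK mxE.
Qed.

Section SixTermDecomposition.
Variables (F : fieldType) (u v w : 'I_6 -> idx -> F).

Definition tsum x y z := \sum_(j < 6) u j x * v j y * w j z.

Hypothesis tsum_offdiag : forall x (y z : idx), y.2 != z.1 -> tsum x y z = 0.
Hypothesis tsum_diag :
  forall x (p q k : 'I_2), (tsum x (p, k) (k, q) != 0) = (x == (q, p)).

Definition inR (l : 'I_6 -> F) :=
  exists phi : idx -> F, forall j, l j = \sum_x phi x * u j x.

Lemma sum_contract (phi : idx -> F) y z :
  \sum_(j < 6) (\sum_x phi x * u j x) * v j y * w j z = \sum_x phi x * tsum x y z.
Proof.
rewrite /tsum; under eq_bigr do rewrite big_distrl /= big_distrl /=.
rewrite exchange_big /=; apply: eq_bigr => x _; rewrite big_distrr /=.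
by apply: eq_bigr => j _; rewrite !mulrA.
Qed.

Lemma inR_offdiag l y z :
  inR l -> y.2 != z.1 -> \sum_(j < 6) l j * v j y * w j z = 0.
Proof.
case=> phi Hl Hyz; under eq_bigr do rewrite Hl.
by rewrite sum_contract big1 // => x _; rewrite tsum_offdiag // mulr0.
Qed.

Lemma contract_eq0 (phi : idx -> F) k :
  (forall p q, \sum_x phi x * tsum x (p, k) (k, q) = 0) -> forall x, phi x = 0.
Proof.
move=> H [q p]; have := H p q.
rewrite (bigD1 (q, p)) //= big1 ?addr0; last first.
  move=> x Hx; apply/eqP; rewrite mulf_eq0; apply/orP; right.
  by rewrite -[_ == 0]negbK tsum_diag.
move/eqP; rewrite mulf_eq0 => /orP [/eqP //|].
by rewrite -[_ == 0]negbK tsum_diag eqxx.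
Qed.

Lemma inR_diag_eq0 l k : inR l ->
  (forall p q, \sum_(j < 6) l j * v j (p, k) * w j (k, q) = 0) -> forall j, l j = 0.
Proof.
case=> phi Hl H.
have phi0 : forall x, phi x = 0.
  apply: (contract_eq0 (k := k)) => p q; rewrite -sum_contract -[RHS](H p q).
  by apply: eq_bigr => j _; rewrite Hl.
by move=> j; rewrite Hl big1 // => x _; rewrite phi0 mul0r.
Qed.

Lemma u_contract_inj (phi : idx -> F) :
  (forall j, \sum_x phi x * u j x = 0) -> forall x, phi x = 0.
Proof.
move=> H; apply: (contract_eq0 (k := 0)) => p q; rewrite -sum_contract.
by apply: big1 => j _; rewrite H !mul0r.
Qed.

(* The (k, l) block of v_j (x) w_j, viewed as a matrix on idx * idx. *)
Definition block k l j (pq : idx) := v j (pq.1, k) * w j (l, pq.2).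
Definition vcol k j (p : 'I_2) := v j (p, k).
Definition wrow l j (q : 'I_2) := w j (l, q).
Definition zero_block k l j := forall pq, block k l j pq = 0.
Definition full j := forall k, nonzero2 (vcol k j) /\ nonzero2 (wrow k j).

Lemma diag_blocks_span k (nu : idx -> F) :
  (forall j, \sum_pq nu pq * block k k j pq = 0) -> forall pq, nu pq = 0.
Proof.
(* Weighting the j-th equation by u_j(q, p), only the term of nu(p, q)
   survives, by the support of t. *)
move=> H [p q].
have E : \sum_(j < 6) u j (q, p) * (\sum_pq nu pq * block k k j pq) = 0.
  by apply: big1 => j _; rewrite H mulr0.
move: E; under eq_bigr do rewrite big_distrr /=.
have G p' q' : \sum_(i < 6) u i (q, p) * (nu (p', q') * block k k i (p', q'))
    = nu (p', q') * tsum (q, p) (p', k) (k, q').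
  by rewrite /tsum big_distrr; apply: eq_bigr => j _; rewrite /block /= mulrCA !mulrA.
rewrite exchange_big /= (bigD1 (p, q)) //= [X in _ + X]big1 ?addr0.
  rewrite G; move/eqP; rewrite mulf_eq0 => /orP [/eqP //|].
  by rewrite -[_ == 0]negbK tsum_diag eqxx.
move=> [p' q'] Hpq /=; rewrite G.
have -> : tsum (q, p) (p', k) (k, q') = 0.
  apply/eqP; rewrite -[_ == 0]negbK tsum_diag.
  by apply/negP => /eqP [E1 E2]; move: Hpq; rewrite E1 E2 eqxx.
by rewrite mulr0.
Qed.

Lemma diag_blocks_not_span3 k (a1 a2 a3 : idx -> F) :
  ~ (forall j, exists s1 s2 s3,
       forall pq, block k k j pq = s1 * a1 pq + s2 * a2 pq + s3 * a3 pq).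
Proof.
move=> Hspan; have lt3 : (3 < #|{: idx}|)%N by rewrite card_prod !card_ord.
have [nu [x nu_x] nu_a] := annihilator (fun i : 'I_3 => nth a1 [:: a1; a2; a3] i) lt3.
apply/negP: nu_x; rewrite negbK; apply/eqP; apply: (diag_blocks_span (k := k)) => j.
have [s1 [s2 [s3 Hs]]] := Hspan j; under eq_bigr do rewrite Hs.
have -> : \sum_pq nu pq * (s1 * a1 pq + s2 * a2 pq + s3 * a3 pq) =
    s1 * (\sum_pq nu pq * a1 pq) + s2 * (\sum_pq nu pq * a2 pq)
    + s3 * (\sum_pq nu pq * a3 pq).
  by rewrite !big_distrr -!big_split; apply: eq_bigr => pq _ /=; ring.
rewrite (nu_a (@Ordinal 3 0 isT)) (nu_a (@Ordinal 3 1 isT)) (nu_a (@Ordinal 3 2 isT)).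
by rewrite !mulr0 !addr0.
Qed.

Definition lincomb3 (al : F) a (be : F) b (ga : F) c (j : 'I_6) :=
  al * (j == a)%:R + be * (j == b)%:R + ga * (j == c)%:R.

Lemma inR_lincomb3 a b c : exists al be ga,
  ~ [/\ al = 0, be = 0 & ga = 0] /\ inR (lincomb3 al a be b ga c).
Proof.
(* Seven unknowns (phi, al, be, ga) against six equations. *)
pose f j (s : idx + 'I_3) :=
  match s with inl x => u j x | inr i => - (j == nth a [:: a; b; c] i)%:R end.
have lt6 : (6 < #|{: idx + 'I_3}|)%N by rewrite card_sum card_prod !card_ord.
have [nu [s nu_s] nu_f] := annihilator f lt6.
have nu_u j : \sum_x nu (inl x) * u j x =
    \sum_(i < 3) nu (inr i) * (j == nth a [:: a; b; c] i)%:R.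
  move/eqP: (nu_f j); rewrite big_sumType /f /= addr_eq0 => /eqP ->.
  by rewrite -sumrN; apply: eq_bigr => i _; rewrite mulrN opprK.
exists (nu (inr (@Ordinal 3 0 isT))), (nu (inr (@Ordinal 3 1 isT))).
exists (nu (inr (@Ordinal 3 2 isT))).
split; last by exists (fun x => nu (inl x)) => j /=; rewrite nu_u sum_ord3.
move=> [al0 be0 ga0].
have nu_r i : nu (inr i) = 0 by case: (ord3P i) => ->.
have nu_l x : nu (inl x) = 0.
  apply: (u_contract_inj (phi := fun y => nu (inl y))) => j.
  by rewrite nu_u big1 // => i _; rewrite nu_r mul0r.
by move: nu_s; case: s => [x|i]; rewrite ?nu_l ?nu_r eqxx.
Qed.

Lemma inR_ext l1 l2 : l1 =1 l2 -> inR l1 -> inR l2.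
Proof. by move=> E [phi Hl]; exists phi => j; rewrite -E. Qed.

Lemma inRZ s l : inR l -> inR (fun j => s * l j).
Proof.
case=> phi Hl; exists (fun x => s * phi x) => j.
by rewrite Hl big_distrr; apply: eq_bigr => x _; exact: mulrA.
Qed.

Lemma sum_lincomb3 al a be b ga c (g : 'I_6 -> F) :
  \sum_(j < 6) lincomb3 al a be b ga c j * g j = al * g a + be * g b + ga * g c.
Proof.
have sum_delta (s : F) d : \sum_(j < 6) s * (j == d)%:R * g j = s * g d.
  rewrite (bigD1 d) //= eqxx mulr1 big1 ?addr0 // => j /negbTE ->.
  by rewrite mulr0 mul0r.
by rewrite /lincomb3; under eq_bigr do rewrite !mulrDl; rewrite !big_split /= !sum_delta.
Qed.

Lemma inR_lincomb3_offdiag al a be b ga c k l :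
  inR (lincomb3 al a be b ga c) -> k != l ->
  forall pq, al * block k l a pq + be * block k l b pq + ga * block k l c pq = 0.
Proof.
move=> HR Hkl [p q]; have := inR_offdiag (y := (p, k)) (z := (l, q)) HR Hkl.
by under eq_bigr do rewrite -mulrA; rewrite sum_lincomb3.
Qed.

Lemma inR_lincomb3_diag al a be b ga c k : inR (lincomb3 al a be b ga c) ->
  (forall pq, al * block k k a pq + be * block k k b pq + ga * block k k c pq = 0) ->
  forall j, lincomb3 al a be b ga c j = 0.
Proof.
move=> HR H; apply: (inR_diag_eq0 (k := k) HR) => p q.
by under eq_bigr do rewrite -mulrA; rewrite sum_lincomb3; exact: (H (p, q)).
Qed.

Lemma lincomb3_a al a be b ga c : a != b -> a != c -> lincomb3 al a be b ga c a = al.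
Proof. by move=> /negbTE h1 /negbTE h2; rewrite /lincomb3 eqxx h1 h2 !mulr0 mulr1 !addr0. Qed.

Lemma lincomb3_b al a be b ga c : b != a -> b != c -> lincomb3 al a be b ga c b = be.
Proof. by move=> /negbTE h1 /negbTE h2; rewrite /lincomb3 eqxx h1 h2 !mulr0 mulr1 add0r addr0. Qed.

Lemma lincomb3_c al a be b ga c : c != a -> c != b -> lincomb3 al a be b ga c c = ga.
Proof. by move=> /negbTE h1 /negbTE h2; rewrite /lincomb3 eqxx h1 h2 !mulr0 mulr1 !add0r. Qed.

(* R contains no nonzero multiple of e_a, resp. no nonzero vector supported
   on {a, b}. *)
Definition avoid1 a := forall al, inR (lincomb3 al a 0 a 0 a) -> al = 0.
Definition avoid2 a b := forall al be, inR (lincomb3 al a be b 0 a) -> al = 0 /\ be = 0.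

Lemma block_nonzero k l j :
  nonzero2 (vcol k j) -> nonzero2 (wrow l j) -> exists pq, block k l j pq != 0.
Proof. by move=> [p Hp] [q Hq]; exists (p, q); rewrite /block mulf_neq0. Qed.

Lemma full_block_nonzero k l j : full j -> exists pq, block k l j pq != 0.
Proof. by move=> Hj; apply: block_nonzero; [exact: (Hj k).1 | exact: (Hj l).2]. Qed.

Lemma full_nonzero_block k l j : full j -> ~ zero_block k l j.
Proof. by move=> Hj Hz; have [pq] := full_block_nonzero k l Hj; rewrite Hz eqxx. Qed.

Lemma zero_block_vcol k l j : ~ nonzero2 (vcol k j) -> zero_block k l j.
Proof.
by move=> H [p q]; have := not_nonzero2 H p; rewrite /block /vcol /= => ->; rewrite mul0r.
Qed.

Lemma zero_block_wrow k l j : ~ nonzero2 (wrow l j) -> zero_block k l j.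
Proof.
by move=> H [p q]; have := not_nonzero2 H q; rewrite /block /wrow /= => ->; rewrite mulr0.
Qed.

Lemma nonfull_zero_blocks j : ~ full j -> forall k l, k != l ->
  (zero_block k k j \/ zero_block l l j) /\ (zero_block k l j \/ zero_block l k j).
Proof.
move=> Hnf k l Hkl.
have [m Hm] : exists m, ~ nonzero2 (vcol m j) \/ ~ nonzero2 (wrow m j).
  apply: NNPP => H; apply: Hnf => m.
  by split; apply: NNPP => H'; apply: H; exists m; [left|right].
case: (ord2_other m Hkl) => ->{m} in Hm; case: Hm => Hm.
- by split; left; apply: zero_block_vcol.
- by split; [left; apply: zero_block_wrow | right; apply: zero_block_wrow].
- by split; right; apply: zero_block_vcol.
- by split; [right; apply: zero_block_wrow | left; apply: zero_block_wrow].
Qed.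

Lemma zero_diag_avoid1 k j : zero_block k k j -> avoid1 j.
Proof.
move=> Hz al HR.
have : lincomb3 al j 0 j 0 j j = 0.
  by apply: (inR_lincomb3_diag (k := k) HR) => pq; rewrite Hz !mulr0 !addr0.
by rewrite /lincomb3 eqxx !mulr1 !addr0.
Qed.

Lemma full_avoid1 j : full j -> avoid1 j.
Proof.
move=> Hj al HR; have [pq Hpq] := full_block_nonzero 0 1 Hj.
have /eqP := inR_lincomb3_offdiag HR ord2_neq01 pq.
by rewrite !mul0r !addr0 mulf_eq0 (negbTE Hpq) orbF => /eqP.
Qed.

Lemma zero_diag_avoid2 k a b :
  a != b -> zero_block k k a -> zero_block k k b -> avoid2 a b.
Proof.
move=> hab Ha Hb al be HR.
have H0 pq : al * block k k a pq + be * block k k b pq + 0 * block k k a pq = 0.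
  by rewrite Ha Hb !mulr0 !addr0.
have := inR_lincomb3_diag HR H0 b; have := inR_lincomb3_diag HR H0 a.
rewrite /lincomb3 eqxx (negbTE hab) eq_sym (negbTE hab) eqxx.
by rewrite !mulr0 !mulr1 !addr0 !add0r => -> ->.
Qed.

Lemma avoid2_complement a b : avoid2 a b ->
  forall c, exists ga de, inR (lincomb3 1 c ga a de b).
Proof.
move=> Hab c; have [al [be [ga [Hnz HR]]]] := inR_lincomb3 a b c.
have [ga0|ga_nz] := eqVneq ga 0.
  have HR' : inR (lincomb3 al a be b 0 a).
    by apply: inR_ext HR => j; rewrite /lincomb3 ga0 !mul0r.
  by have [al0 be0] := Hab _ _ HR'; case: Hnz.
exists (al / ga), (be / ga); apply: inR_ext (inRZ ga^-1 HR) => j.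
by rewrite /lincomb3 /=; field.
Qed.

Lemma zero_diag_three_false k a b c : a != b -> a != c -> b != c ->
  zero_block k k a -> zero_block k k b -> zero_block k k c -> False.
Proof.
move=> hab hac hbc Ha Hb Hc.
have [al [be [ga [Hnz HR]]]] := inR_lincomb3 a b c.
have H0 pq : al * block k k a pq + be * block k k b pq + ga * block k k c pq = 0.
  by rewrite Ha Hb Hc !mulr0 !addr0.
have := inR_lincomb3_diag HR H0 a; have := inR_lincomb3_diag HR H0 b.
have := inR_lincomb3_diag HR H0 c.
rewrite lincomb3_a // lincomb3_b ?(eq_sym b a) // lincomb3_c ?(eq_sym c a) ?(eq_sym c b) //.
by move=> ga0 be0 al0; apply: Hnz.
Qed.

Lemma zero_diag_cover k : exists p q, forall j, zero_block k k j -> j = p \/ j = q.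
Proof.
case: (classic (exists p, zero_block k k p)) => [[p Hp]|Hn]; last first.
  by exists 0, 0 => j Hj; case: Hn; exists j.
case: (classic (exists q, zero_block k k q /\ q != p)) => [[q [Hq hqp]]|Hn]; last first.
  by exists p, p => j Hj; left; case: (eqVneq j p) => // hjp; case: Hn; exists j.
exists p, q => j Hj; case: (eqVneq j p) => [->|hjp]; first by left.
case: (eqVneq j q) => [->|hjq]; first by right.
by exfalso; apply: (zero_diag_three_false (k := k) _ _ _ Hp Hq Hj); rewrite eq_sym.
Qed.

Lemma exists_full : exists j, full j.
Proof.
apply: NNPP => Hn; have [p [q Hpq]] := zero_diag_cover 1.
apply: (diag_blocks_not_span3 (k := 0) (a1 := block 0 0 p) (a2 := block 0 0 q)
  (a3 := fun=> 0)) => j.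
have Hf : ~ full j by move=> Hf; apply: Hn; exists j.
have [[H00|H11] _] := nonfull_zero_blocks Hf ord2_neq01.
  by exists 0, 0, 0 => pq; rewrite H00 !mul0r !addr0.
case: (Hpq j H11) => ->.
  by exists 1, 0, 0 => pq; rewrite mul1r !mul0r !addr0.
by exists 0, 1, 0 => pq; rewrite mul1r !mul0r !addr0 add0r.
Qed.

Lemma diag_block_parallel k j a :
  det2 (vcol k j) (vcol k a) = 0 -> det2 (wrow k j) (wrow k a) = 0 -> full a ->
  exists s, forall pq, block k k j pq = s * block k k a pq.
Proof.
move=> HB HC Ha.
have [s1 Hs1] := det2_eq0_scale HB (Ha k).1; have [s2 Hs2] := det2_eq0_scale HC (Ha k).2.
exists (s1 * s2) => [[p q]]; rewrite /block /=.
by have := Hs1 p; have := Hs2 q; rewrite /vcol /wrow => -> ->; ring.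
Qed.

Lemma diag_block_vcol_span k j n : det2 (vcol k j) n = 0 -> nonzero2 n ->
  exists s1 s2, forall pq, block k k j pq =
    s1 * (n pq.1 * (pq.2 == 0)%:R) + s2 * (n pq.1 * (pq.2 == 1)%:R).
Proof.
move=> HB Hn; have [s Hs] := det2_eq0_scale HB Hn.
exists (s * wrow k j 0), (s * wrow k j 1) => [[p q]]; rewrite /block /=.
have := Hs p; rewrite /vcol /wrow => ->.
by case: (ord2P q) => ->; rewrite eqxx ?(negbTE ord2_neq01) ?(negbTE ord2_neq10) /=; ring.
Qed.

Lemma diag_block_wrow_span k j m : det2 (wrow k j) m = 0 -> nonzero2 m ->
  exists s1 s2, forall pq, block k k j pq =
    s1 * ((pq.1 == 0)%:R * m pq.2) + s2 * ((pq.1 == 1)%:R * m pq.2).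
Proof.
move=> HC Hm; have [s Hs] := det2_eq0_scale HC Hm.
exists (s * vcol k j 0), (s * vcol k j 1) => [[p q]]; rewrite /block /=.
have := Hs q; rewrite /vcol /wrow => ->.
by case: (ord2P p) => ->; rewrite eqxx ?(negbTE ord2_neq01) ?(negbTE ord2_neq10) /=; ring.
Qed.

Lemma zero_offblock_parallel k l a : k != l -> avoid1 a -> zero_block k l a ->
  forall j j', full j -> full j' ->
  det2 (vcol k j') (vcol k j) = 0 /\ det2 (wrow l j') (wrow l j) = 0.
Proof.
move=> hkl Ha Hz j j' Hj Hj'.
have Haj : avoid2 a j.
  move=> al be HR; have [pq Hpq] := full_block_nonzero k l Hj.
  have /eqP := inR_lincomb3_offdiag HR hkl pq.
  rewrite Hz mulr0 add0r mul0r addr0 mulf_eq0 (negbTE Hpq) orbF => /eqP be0.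
  by split=> //; apply: Ha; apply: inR_ext HR => i; rewrite /lincomb3 be0 !mul0r.
have [ga [de HR]] := avoid2_complement Haj j'.
have E p q : vcol k j' p * wrow l j' q = vcol k j p * (- de * wrow l j q).
  have := inR_lincomb3_offdiag HR hkl (p, q); rewrite Hz mulr0 addr0 mul1r /block /=.
  by move/eqP; rewrite addr_eq0 => /eqP; rewrite /vcol /wrow => ->; ring.
split; first exact: det2_outer_l E (Hj' l).2.
apply: (det2_outer_r (x' := fun p => - de * vcol k j p) _ (Hj' k).1) => p q.
by rewrite E; ring.
Qed.

Lemma parallel_of_not_avoid2 k l a b : k != l -> full a -> full b -> ~ avoid2 a b ->
  det2 (vcol k b) (vcol k a) = 0 /\ det2 (wrow l b) (wrow l a) = 0.
Proof.
move=> hkl Ha Hb Hab.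
have [al [be [HR Hnz]]] : exists al be, inR (lincomb3 al a be b 0 a) /\ ~ (al = 0 /\ be = 0).
  apply: NNPP => H; apply: Hab => al be HR; apply: NNPP => H'; apply: H.
  by exists al, be.
have be_nz : be != 0.
  apply/eqP => be0; apply: Hnz; split=> //.
  by apply: (full_avoid1 Ha); apply: inR_ext HR => j; rewrite /lincomb3 be0 !mul0r.
have E p q : vcol k b p * wrow l b q = vcol k a p * (- (al / be) * wrow l a q).
  have := inR_lincomb3_offdiag HR hkl (p, q).
  rewrite mul0r addr0 /block /vcol /wrow /= => /eqP; rewrite addrC addr_eq0 => /eqP E.
  by apply: (mulfI be_nz); rewrite E; field.
split; first exact: det2_outer_l E (Hb l).2.
apply: (det2_outer_r (x' := fun p => - (al / be) * vcol k a p) _ (Hb k).1) => p q.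
by rewrite E; ring.
Qed.

(* An off-diagonal block (k, l) vanishes at some index a with e_a outside R. *)
Definition offzero k l := exists a, avoid1 a /\ zero_block k l a.

Lemma both_offzero_false : offzero 0 1 -> offzero 1 0 -> False.
Proof.
move=> [a [Ha Hza]] [b [Hb Hzb]].
have [j0 Hj0] := exists_full; have [p [q Hpq]] := zero_diag_cover 1.
apply: (diag_blocks_not_span3 (k := 0) (a1 := block 0 0 j0) (a2 := block 0 0 p)
  (a3 := block 0 0 q)) => j.
case: (classic (full j)) => Hf.
  have [HB _] := zero_offblock_parallel ord2_neq01 Ha Hza Hj0 Hf.
  have [_ HC] := zero_offblock_parallel ord2_neq10 Hb Hzb Hj0 Hf.
  have [s Hs] := diag_block_parallel HB HC Hj0.
  by exists s, 0, 0 => pq; rewrite Hs !mul0r !addr0.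
have [[H00|H11] _] := nonfull_zero_blocks Hf ord2_neq01.
  by exists 0, 0, 0 => pq; rewrite H00 !mul0r !addr0.
case: (Hpq j H11) => ->.
  by exists 0, 1, 0 => pq; rewrite mul1r !mul0r !addr0 add0r.
by exists 0, 0, 1 => pq; rewrite mul1r !mul0r !add0r.
Qed.

Lemma zero_diag_unique k l : k != l -> ~ offzero l k ->
  exists p, forall j, zero_block l l j -> j = p.
Proof.
move=> hkl Hlk; have [j0 Hj0] := exists_full.
have zero_kl j : zero_block l l j -> zero_block k l j.
  move=> Hll; have Hnf : ~ full j by move=> Hf; exact: full_nonzero_block Hf Hll.
  have [_ Hoff] := nonfull_zero_blocks Hnf hkl.
  case: Hoff => // Hlk'; case: Hlk; exists j; split=> //.
  exact: zero_diag_avoid1 Hll.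
case: (classic (exists p, zero_block l l p)) => [[p Hp]|Hn]; last first.
  by exists 0 => j Hj; case: Hn; exists j.
exists p => j Hj; case: (eqVneq j p) => // hjp; exfalso.
have [ga [de HR]] := avoid2_complement (zero_diag_avoid2 hjp Hj Hp) j0.
apply: (full_nonzero_block (k := k) (l := l) Hj0) => pq.
have := inR_lincomb3_offdiag HR hkl pq.
by rewrite (zero_kl j Hj) (zero_kl p Hp) !mulr0 !addr0 mul1r.
Qed.

Lemma one_offzero_false k l : k != l -> offzero k l -> ~ offzero l k -> False.
Proof.
move=> hkl [a [Ha Hza]] Hlk.
have [j0 Hj0] := exists_full; have [p Hp] := zero_diag_unique hkl Hlk.
apply: (diag_blocks_not_span3 (k := k) (a1 := fun pq => vcol k j0 pq.1 * (pq.2 == 0)%:R)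
  (a2 := fun pq => vcol k j0 pq.1 * (pq.2 == 1)%:R) (a3 := block k k p)) => j.
case: (classic (full j)) => Hf.
  have [HB _] := zero_offblock_parallel hkl Ha Hza Hj0 Hf.
  have [s1 [s2 Hs]] := diag_block_vcol_span HB (Hj0 k).1.
  by exists s1, s2, 0 => pq; rewrite Hs mul0r addr0.
have [[Hkk|Hll] _] := nonfull_zero_blocks Hf hkl.
  by exists 0, 0, 0 => pq; rewrite Hkk !mul0r !addr0.
by rewrite (Hp j Hll); exists 0, 0, 1 => pq; rewrite mul1r !mul0r !add0r.
Qed.

Lemma all_full_of_no_offzero : ~ offzero 0 1 -> ~ offzero 1 0 -> forall j, full j.
Proof.
move=> N01 N10 j; apply: NNPP => Hf.
have [Hdiag Hoff] := nonfull_zero_blocks Hf ord2_neq01.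
have Hj : avoid1 j by case: Hdiag; apply: zero_diag_avoid1.
by case: Hoff => Hz; [apply: N01 | apply: N10]; exists j.
Qed.

Section AllFull.
Hypothesis all_full : forall j, full j.

Lemma diag_parallel_of_not_avoid2 a b :
  ~ avoid2 a b -> exists s, forall pq, block 0 0 b pq = s * block 0 0 a pq.
Proof.
move=> Hab.
have [HB _] := parallel_of_not_avoid2 ord2_neq01 (all_full a) (all_full b) Hab.
have [_ HC] := parallel_of_not_avoid2 ord2_neq10 (all_full a) (all_full b) Hab.
exact: diag_block_parallel HB HC (all_full a).
Qed.

Lemma avoid2_triangle : exists j0 j1 j2, [/\ avoid2 j0 j1, avoid2 j0 j2 & avoid2 j1 j2].
Proof.
pose j0 : 'I_6 := 0.
have [j1 H01] : exists j1, avoid2 j0 j1.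
  apply: NNPP => Hn; apply: (diag_blocks_not_span3 (k := 0) (a1 := block 0 0 j0)
    (a2 := fun=> 0) (a3 := fun=> 0)) => j.
  have Hj : ~ avoid2 j0 j by move=> H; apply: Hn; exists j.
  have [s Hs] := diag_parallel_of_not_avoid2 Hj.
  by exists s, 0, 0 => pq; rewrite Hs !mul0r !addr0.
have [j2 [H02 H12]] : exists j2, avoid2 j0 j2 /\ avoid2 j1 j2.
  apply: NNPP => Hn; apply: (diag_blocks_not_span3 (k := 0) (a1 := block 0 0 j0)
    (a2 := block 0 0 j1) (a3 := fun=> 0)) => j.
  have [H|H] : ~ avoid2 j0 j \/ ~ avoid2 j1 j.
    apply: NNPP => H; apply: Hn; exists j.
    by split; apply: NNPP => H'; apply: H; [left|right].
  - have [s Hs] := diag_parallel_of_not_avoid2 H.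
    by exists s, 0, 0 => pq; rewrite Hs !mul0r !addr0.
  - have [s Hs] := diag_parallel_of_not_avoid2 H.
    by exists 0, s, 0 => pq; rewrite Hs !mul0r !addr0 add0r.
by exists j0, j1, j2.
Qed.

Lemma avoid2_triangle_det j0 j1 j2 : avoid2 j0 j1 -> avoid2 j0 j2 -> avoid2 j1 j2 ->
  forall k l, k != l ->
  det2 (vcol k j0) (vcol k j1) = 0 \/ det2 (wrow l j0) (wrow l j1) = 0.
Proof.
move=> H01 H02 H12 k l hkl.
have [ga [de HR]] := avoid2_complement H01 j2.
have ga_nz : ga != 0.
  apply/eqP => ga0; have := H12 de 1; case; last by move=> _ /eqP; rewrite oner_eq0.
  by apply: inR_ext HR => j; rewrite /lincomb3 ga0; ring.
have de_nz : de != 0.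
  apply/eqP => de0; have := H02 ga 1; case; last by move=> _ /eqP; rewrite oner_eq0.
  by apply: inR_ext HR => j; rewrite /lincomb3 de0; ring.
have E p q : vcol k j2 p * wrow l j2 q =
    - ga * (vcol k j0 p * wrow l j0 q) + - de * (vcol k j1 p * wrow l j1 q).
  have := inR_lincomb3_offdiag HR hkl (p, q); rewrite mul1r /block /= => /eqP.
  by rewrite -addrA addr_eq0 => /eqP; rewrite /vcol /wrow => ->; ring.
move/eqP: (det2_outer_sum E); rewrite !mulf_eq0 !oppr_eq0 (negbTE ga_nz) (negbTE de_nz) /=.
by case/orP => /eqP; [left | right].
Qed.

Lemma vcol_parallel_all k l j0 j1 : k != l -> avoid2 j0 j1 ->
  det2 (vcol k j0) (vcol k j1) = 0 -> forall j, det2 (vcol k j) (vcol k j0) = 0.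
Proof.
move=> hkl H01 H j.
have H10 : det2 (vcol k j1) (vcol k j0) = 0 by rewrite det2C H oppr0.
have [s Hs] := det2_eq0_scale H10 (all_full j0 k).1.
have [ga [de HR]] := avoid2_complement H01 j.
apply: (det2_outer_l (y' := fun q => - ga * wrow l j0 q - de * s * wrow l j1 q) _
  (all_full j l).2) => p q.
have := inR_lincomb3_offdiag HR hkl (p, q); rewrite mul1r /block /= => /eqP.
rewrite -addrA addr_eq0 => /eqP ->.
by have := Hs p; rewrite /vcol /wrow => ->; ring.
Qed.

Lemma wrow_parallel_all k l j0 j1 : k != l -> avoid2 j0 j1 ->
  det2 (wrow l j0) (wrow l j1) = 0 -> forall j, det2 (wrow l j) (wrow l j0) = 0.
Proof.
move=> hkl H01 H j.
have H10 : det2 (wrow l j1) (wrow l j0) = 0 by rewrite det2C H oppr0.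
have [s Hs] := det2_eq0_scale H10 (all_full j0 l).2.
have [ga [de HR]] := avoid2_complement H01 j.
apply: (det2_outer_r (x' := fun p => - ga * vcol k j0 p - de * s * vcol k j1 p) _
  (all_full j k).1) => p q.
have := inR_lincomb3_offdiag HR hkl (p, q); rewrite mul1r /block /= => /eqP.
rewrite -addrA addr_eq0 => /eqP ->.
by have := Hs q; rewrite /vcol /wrow => ->; ring.
Qed.

Lemma all_full_false : False.
Proof.
have [j0 [j1 [j2 [H01 H02 H12]]]] := avoid2_triangle.
have Hdet := avoid2_triangle_det H01 H02 H12.
have Hj0 := all_full j0.
case: (Hdet 0 1 ord2_neq01) => [HB0|HC1]; case: (Hdet 1 0 ord2_neq10) => [HB1|HC0].
- have GB := vcol_parallel_all ord2_neq01 H01 HB0.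
  apply: (diag_blocks_not_span3 (k := 0) (a1 := fun pq => vcol 0 j0 pq.1 * (pq.2 == 0)%:R)
    (a2 := fun pq => vcol 0 j0 pq.1 * (pq.2 == 1)%:R) (a3 := fun=> 0)) => j.
  have [s1 [s2 Hs]] := diag_block_vcol_span (GB j) (Hj0 0).1.
  by exists s1, s2, 0 => pq; rewrite Hs mul0r addr0.
- have GB := vcol_parallel_all ord2_neq01 H01 HB0.
  have GC := wrow_parallel_all ord2_neq10 H01 HC0.
  apply: (diag_blocks_not_span3 (k := 0) (a1 := block 0 0 j0) (a2 := fun=> 0)
    (a3 := fun=> 0)) => j.
  have [s Hs] := diag_block_parallel (GB j) (GC j) Hj0.
  by exists s, 0, 0 => pq; rewrite Hs !mul0r !addr0.
- have GB := vcol_parallel_all ord2_neq10 H01 HB1.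
  have GC := wrow_parallel_all ord2_neq01 H01 HC1.
  apply: (diag_blocks_not_span3 (k := 1) (a1 := block 1 1 j0) (a2 := fun=> 0)
    (a3 := fun=> 0)) => j.
  have [s Hs] := diag_block_parallel (GB j) (GC j) Hj0.
  by exists s, 0, 0 => pq; rewrite Hs !mul0r !addr0.
- have GC := wrow_parallel_all ord2_neq10 H01 HC0.
  apply: (diag_blocks_not_span3 (k := 0) (a1 := fun pq => (pq.1 == 0)%:R * wrow 0 j0 pq.2)
    (a2 := fun pq => (pq.1 == 1)%:R * wrow 0 j0 pq.2) (a3 := fun=> 0)) => j.
  have [s1 [s2 Hs]] := diag_block_wrow_span (GC j) (Hj0 0).2.
  by exists s1, s2, 0 => pq; rewrite Hs mul0r addr0.
Qed.

End AllFull.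

Lemma no_six_term_decomposition : False.
Proof.
case: (classic (offzero 0 1)) => H01; case: (classic (offzero 1 0)) => H10.
- exact: both_offzero_false H01 H10.
- exact: one_offzero_false ord2_neq01 H01 H10.
- exact: one_offzero_false ord2_neq10 H10 H01.
- exact: all_full_false (all_full_of_no_offzero H01 H10).
Qed.

End SixTermDecomposition.

Definition mx22 (F : fieldType) (a b c d : F) (x : idx) : F :=
  if x.1 == 0 then (if x.2 == 0 then a else b) else (if x.2 == 0 then c else d).

(* Strassen's seven products; the third factors are transposed because
   <2,2,2> pairs e_{ki} with the entry (i, k) of the product. *)
Definition strassen_u (F : fieldType) (l : 'I_7) : idx -> F :=
  match val l with
  | 0 => mx22 1 0 0 1 | 1 => mx22 0 0 1 1 | 2 => mx22 1 0 0 0 | 3 => mx22 0 0 0 1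
  | 4 => mx22 1 1 0 0 | 5 => mx22 (-1) 0 1 0 | _ => mx22 0 1 0 (-1) end.
Definition strassen_v (F : fieldType) (l : 'I_7) : idx -> F :=
  match val l with
  | 0 => mx22 1 0 0 1 | 1 => mx22 1 0 0 0 | 2 => mx22 0 1 0 (-1) | 3 => mx22 (-1) 0 1 0
  | 4 => mx22 0 0 0 1 | 5 => mx22 1 1 0 0 | _ => mx22 0 0 1 1 end.
Definition strassen_w (F : fieldType) (l : 'I_7) : idx -> F :=
  match val l with
  | 0 => mx22 1 0 0 1 | 1 => mx22 0 1 0 (-1) | 2 => mx22 0 0 1 1 | 3 => mx22 1 1 0 0
  | 4 => mx22 (-1) 0 1 0 | 5 => mx22 0 0 0 1 | _ => mx22 1 0 0 0 end.

Lemma strassen (F : fieldType) : rank_le (matmul222 F) 7%N.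
Proof.
exists (@strassen_u F), (@strassen_v F), (@strassen_w F) => [[x1 x2] [y1 y2] [z1 z2]].
rewrite !big_ord_recr big_ord0 /=.
case: (ord2P x1) => ->; case: (ord2P x2) => ->; case: (ord2P y1) => ->;
case: (ord2P y2) => ->; case: (ord2P z1) => ->; case: (ord2P z2) => ->;
rewrite /matmul222 /strassen_u /strassen_v /strassen_w /mx22 /=; ring.
Qed.

Lemma rank_le_widen (F : fieldType) (t : tensor F) (r1 r2 : nat) :
  (r1 <= r2)%N -> rank_le t r1 -> rank_le t r2.
Proof.
move=> Hr [u [v [w Ht]]].
pose ext (f : 'I_r1 -> idx -> F) (j : 'I_r2) (x : idx) := oapp (fun i : 'I_r1 => f i x) 0 (insub (val j)).
exists (ext u), (ext v), (ext w) => x y z.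
pose G (n : nat) := oapp (fun i : 'I_r1 => u i x * v i y * w i z) 0 (insub n).
have E1 : \sum_(i < r1) u i x * v i y * w i z = \sum_(i < r1) G i.
  by apply: eq_bigr => i _; rewrite /G valK.
rewrite Ht E1 (big_ord_widen _ G Hr) big_mkcond /=.
apply: eq_bigr => j _; rewrite /ext /G.
case: ifP => h; first by rewrite insubT.
by rewrite insubN ?h //= !mul0r.
Qed.

Lemma rank_ge7_of_matmul222_support (F : fieldType) (t : tensor F) :
  same_support t (matmul222 F) -> forall r, rank_le t r -> (7 <= r)%N.
Proof.
move=> Ht r Hr; rewrite leqNgt; apply/negP => Hlt.
have [u [v [w Huvw]]] := rank_le_widen (r2 := 6) Hlt Hr.
apply: (@no_six_term_decomposition F u v w).
- move=> x y z Hyz; rewrite /tsum -Huvw; apply/eqP; rewrite -[_ == 0]negbK Ht.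
  by rewrite /matmul222 (negbTE Hyz) /= andbF eqxx.
- move=> [x1 x2] p q k; rewrite /tsum -Huvw Ht /matmul222 eqxx /= xpair_eqE.
  rewrite [q == x1]eq_sym.
  by case: (x2 == p); case: (x1 == q); rewrite /= ?oner_eq0 ?eqxx.
Qed.

Local Close Scope ring_scope.

Theorem theorem1 (F : fieldType) : is_support_rank (matmul222 F) 7.
Proof.
split; last exact: rank_ge7_of_matmul222_support.
exists (matmul222 F); split=> //.
by split; [exact: strassen | exact: rank_ge7_of_matmul222_support].
Qed.
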